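(* For every positive integer $n$, $N'(n,1,0)=n$.
   Context: $\mathbb{Z}_4$ is the ring of integers modulo $4$; a $\mathbb{Z}_4$-code of length $n$ is a $\mathbb{Z}_4$-submodule of $\mathbb{Z}_4^n$. Two codes are equivalent if one is obtained from the other by permuting coordinates and changing the signs of some coordinates. Every $\mathbb{Z}_4$-code is permutation-equivalent to one with generator matrix $\begin{pmatrix} I_{k_1} & A & B \\ O & 2I_{k_2} & 2D\end{pmatrix}$ with $A,D$ $(0,1)$-matrices and $B$ a $\mathbb{Z}_4$-matrix; the code then has type $4^{k_1}2^{k_2}$. The trivial extension of a code $C$ of length $n-1$ is $\{(c,0)\mid c\in C\}$ (the only code of length $0$ is the zero code). $N'(n,k_1,k_2)$ denotes the number of equivalence classes of $\mathbb{Z}_4$-codes of length $n$ and type $4^{k_1}2^{k_2}$ that are not equivalent to the trivial extension of any $\mathbb{Z}_4$-code of length $n-1$. *)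

From HB Require Import structures.
From mathcomp Require Import all_boot all_order all_algebra all_fingroup.
Set Implicit Arguments. Unset Strict Implicit. Unset Printing Implicit Defensive.
Import GRing.Theory.
Local Open Scope ring_scope.

Notation Z4 := 'Z_4.
Notation word n := 'rV[Z4]_n.

Definition is_code n (C : {set word n}) : bool :=
  [&& (0 : word n) \in C,
      [forall x in C, forall y in C, x + y \in C] &
      [forall a : Z4, forall x in C, a *: x \in C]].

Definition permw n (s : 'S_n) (x : word n) : word n := \row_j x 0 (s j).

Definition code_equiv n (C D : {set word n}) : bool :=
  [exists s : 'S_n, exists e : {ffun 'I_n -> bool},
     D == [set (\row_j ((-1) ^+ e j * x 0 (s j)) : word n) | x : word n in C]].

(* G is a generator matrix in standard form
   ( I_k1  A    B  )
   ( O    2I_k2 2D )  with A, D (0,1)-matrices, B arbitrary. *)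
Definition std_gen n k1 k2 (G : 'M[Z4]_(k1 + k2, n)) : bool :=
  [forall i : 'I_(k1 + k2), forall j : 'I_n,
    if (i < k1)%N then
      (if (j < k1)%N then G i j == (i == j :> nat)%:R
       else if (j < k1 + k2)%N then (G i j == 0) || (G i j == 1)
       else true)
    else
      (if (j < k1)%N then G i j == 0
       else if (j < k1 + k2)%N then G i j == ((i == j :> nat)%:R *+ 2)
       else (G i j == 0) || (G i j == 2%:R))].

(* C has type 4^k1 2^k2: C is permutation-equivalent to the code generated
   by a standard-form generator matrix. *)
Definition has_type n k1 k2 (C : {set word n}) : bool :=
  (k1 + k2 <= n)%N &&
  [exists G : 'M[Z4]_(k1 + k2, n), exists s : 'S_n,
     std_gen G && (C == [set permw s (c *m G) | c in [set: 'rV[Z4]_(k1 + k2)]])].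

Definition ext_word n (c : word n.-1) : word n :=
  \row_(j < n) (if (insub (j : nat) : option 'I_n.-1) is Some k
                then c 0 k else 0).

(* Trivial extension of a code C0 of length n.-1 to length n (append 0). *)
Definition triv_ext n (C0 : {set word n.-1}) : {set word n} :=
  [set @ext_word n c | c in C0].

Definition is_triv_ext n (C : {set word n}) : bool :=
  [exists C0 : {set word n.-1}, is_code C0 && (C == triv_ext C0)].

Definition Ncodes n k1 k2 : {set {set word n}} :=
  [set C | [&& is_code C, has_type k1 k2 C &
             ~~ [exists D, is_triv_ext D && code_equiv C D]]].

Definition Nprime n k1 k2 : nat :=
  #|[set [set D | code_equiv C D] | C in Ncodes n k1 k2]|.

(* A code of type 4^1 is generated by a single word v with a unit coordinate,
   and it is equivalent to a trivial extension exactly when some coordinate of v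
   vanishes.  Otherwise sign changes turn every coordinate into 1 or 2 and a
   permutation sorts them, so the class is determined by the number t of
   coordinates equal to 2, with 0 <= t < n since some coordinate is a unit.
   Conversely t is an invariant: two generators of the same code differ by a
   unit factor, which fixes the coordinates equal to 2, as do sign changes and
   permutations. *)

From mathcomp Require Import all_boot all_order all_algebra all_fingroup.
Set Implicit Arguments. Unset Strict Implicit. Unset Printing Implicit Defensive.
Import GRing.Theory.
Local Open Scope ring_scope.

Lemma perm_of_card_eq n (f g : pred 'I_n) :
  #|f| = #|g| -> exists p : 'S_n, forall j, f j = g (p j).
Proof.
move=> fg.
have count_fiber (h : pred 'I_n) b :
    count (preim h (pred1 b)) (enum 'I_n) = if b then #|h| else (n - #|h|)%N.
  rewrite -size_filter enumT -cardE; case: b.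
    by apply: eq_card => j; rewrite -!topredE /= addbT negbK.
  rewrite -[n in (n - _)%N]card_ord -(cardC h) addKn.
  by apply: eq_card => j; rewrite -!topredE /= addbF.
have /tuple_permP [p fgp] : perm_eq [tuple f j | j < n] [tuple g j | j < n].
  by apply/allP => b _; rewrite /= !count_map -enumT (count_fiber f b) (count_fiber g b) fg.
exists p => j; have := congr1 (fun s => nth false s j) fgp.
by rewrite !nth_mktuple tnth_mktuple.
Qed.

Lemma card_ord_lt n t : (t <= n)%N -> #|[pred k : 'I_n | (k < t)%N]| = t.
Proof. by move=> tn; rewrite -sum1_card (big_ord_narrow tn) sum1_card card_ord. Qed.

Lemma Z4_sign_decomp (x : Z4) :
  x != 0 -> (-1) ^+ (x == -1) * (if x == 2 then 2 else 1) = x.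
Proof. by move: x; case=> [[|[|[|[|//]]]] ?] //= _; apply/val_inj. Qed.

Lemma Z4_mul_unit_eq2 (a b x : Z4) : a * b = 1 -> (a * x == 2) = (x == 2).
Proof. by move: a b x; do 3 case=> [[|[|[|[|//]]]] ?]; move/(congr1 val). Qed.

Lemma Z4_mul_sign_eq2 (b : bool) (x : Z4) : ((-1) ^+ b * x == 2) = (x == 2).
Proof. by apply: (@Z4_mul_unit_eq2 _ ((-1) ^+ b)); rewrite -signr_addb addbb. Qed.

Section MonomialMaps.

Variables (R : comPzRingType) (n : nat).
Implicit Types (s : 'S_n) (e : {ffun 'I_n -> bool}) (x : 'rV[R]_n).

Definition monomial s e x : 'rV[R]_n := \row_j ((-1) ^+ e j * x 0 (s j)).

Lemma monomialZ s e a x : monomial s e (a *: x) = a *: monomial s e x.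
Proof. by apply/rowP => j; rewrite !mxE mulrCA. Qed.

Lemma monomial_comp s s' e e' x :
  monomial s' e' (monomial s e x) = monomial (s' * s)%g [ffun j => e' j (+) e (s' j)] x.
Proof. by apply/rowP => j; rewrite !mxE ffunE permM signr_addb mulrA. Qed.

Lemma monomialK s e :
  cancel (monomial s e) (monomial s^-1%g [ffun j => e (s^-1%g j)]).
Proof. by move=> x; apply/rowP => j; rewrite !mxE ffunE permKV signrMK. Qed.

Lemma monomial1 x : monomial 1%g [ffun=> false] x = x.
Proof. by apply/rowP => j; rewrite !mxE ffunE perm1 mul1r. Qed.

Lemma monomial_eq0 s e x j : (monomial s e x 0 j == 0) = (x 0 (s j) == 0).
Proof. by rewrite mxE mulr_sign; case: ifP; rewrite ?oppr_eq0. Qed.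

End MonomialMaps.

Section Equivalence.

Variable n : nat.
Implicit Types C D E : {set word n}.

Lemma code_equivP C D :
  reflect (exists s e, D = monomial s e @: C) (code_equiv C D).
Proof.
apply: (iffP existsP) => [[s /existsP [e /eqP ->]]|[s [e ->]]].
  by exists s, e.
by exists s; apply/existsP; exists e.
Qed.

Lemma code_equiv_refl C : code_equiv C C.
Proof.
apply/code_equivP; exists 1%g, [ffun=> false].
by rewrite (eq_imset _ (@monomial1 _ _)) imset_id.
Qed.

Lemma code_equiv_sym C D : code_equiv C D -> code_equiv D C.
Proof.
case/code_equivP => s [e ->]; apply/code_equivP.
exists s^-1%g, [ffun j => e (s^-1%g j)].
by rewrite -imset_comp (eq_imset _ (monomialK s e)) imset_id.
Qed.

Lemma code_equiv_trans C D E :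
  code_equiv C D -> code_equiv D E -> code_equiv C E.
Proof.
case/code_equivP => s [e ->]; case/code_equivP => s' [e' ->].
apply/code_equivP; exists (s' * s)%g, [ffun j => e' j (+) e (s' j)].
by rewrite -imset_comp; apply: eq_imset => x /=; rewrite monomial_comp.
Qed.

Definition equiv_class C : {set {set word n}} := [set D | code_equiv C D].

Lemma equiv_class_eq C D : code_equiv C D -> equiv_class C = equiv_class D.
Proof.
move=> CD; apply/setP => E; rewrite !inE; apply/idP/idP.
  exact: code_equiv_trans (code_equiv_sym CD).
exact: code_equiv_trans CD.
Qed.

End Equivalence.

Section GeneratedCodes.

Variable n : nat.
Implicit Types v : word n.

Definition gen_code v : {set word n} := [set a *: v | a : Z4].

Lemma mem_gen_code v : v \in gen_code v.
Proof. by apply/imsetP; exists 1; rewrite ?scale1r. Qed.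

Lemma gen_code_is_code v : is_code (gen_code v).
Proof.
apply/and3P; split.
- by apply/imsetP; exists 0; rewrite ?scale0r.
- apply/forall_inP => _ /imsetP [a _ ->]; apply/forall_inP => _ /imsetP [b _ ->].
  by apply/imsetP; exists (a + b); rewrite ?scalerDl.
- apply/forallP => c; apply/forall_inP => _ /imsetP [a _ ->].
  by apply/imsetP; exists (c * a); rewrite ?scalerA.
Qed.

Lemma monomial_gen_code s e v :
  monomial s e @: gen_code v = gen_code (monomial s e v).
Proof. by rewrite -imset_comp; apply: eq_imset => a /=; rewrite monomialZ. Qed.

Lemma permwZ s a v : permw s (a *: v) = a *: permw s v.
Proof. by apply/rowP => j; rewrite !mxE. Qed.

Lemma gen_mx_code (G : 'M[Z4]_(1 + 0, n)) s :
  [set permw s (c *m G) | c in [set: 'rV[Z4]_(1 + 0)]] = gen_code (permw s G).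
Proof.
apply/setP => x; apply/imsetP/imsetP => [[c _ ->]|[a _ ->]].
  by exists (c 0 0); rewrite // -permwZ; congr permw; apply/rowP => j; rewrite !mxE big_ord1.
exists (const_mx a); rewrite ?inE // -permwZ; congr permw.
by apply/rowP => j; rewrite !mxE big_ord1 mxE.
Qed.

End GeneratedCodes.

Lemma std_gen10 m (G : 'M[Z4]_(1 + 0, m.+1)) : std_gen G = (G 0 0 == 1).
Proof.
apply/forallP/eqP => [hG|G00 i]; first by have /forallP/(_ 0)/eqP := hG 0.
apply/forallP => -[[|j] hj]; rewrite ord1 //=.
by rewrite -G00; apply/eqP; congr (G 0 _); apply: val_inj.
Qed.

Lemma has_type10P m (C : {set word m.+1}) :
  reflect (exists2 v, C = gen_code v & exists j, v 0 j = 1) (has_type 1 0 C).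
Proof.
apply: (iffP andP) => [[_ /existsP [G /existsP [s /andP [G00 /eqP ->]]]]|[v -> [j vj]]].
  exists (permw s G); first exact: gen_mx_code.
  by exists (s^-1 0)%g; rewrite mxE permKV; apply/eqP; rewrite -std_gen10.
split=> //; apply/existsP; exists (permw (tperm j 0) v); apply/existsP; exists (tperm j 0).
rewrite std_gen10 mxE tpermR vj eqxx gen_mx_code; apply/eqP; congr gen_code.
by apply/rowP => k; rewrite !mxE tpermK.
Qed.

Lemma gen_code_triv_ext m (v : word m.+1) :
  v 0 ord_max = 0 -> is_triv_ext (gen_code v).
Proof.
move=> v0; apply/existsP; exists (gen_code (\row_(k < m) v 0 (widen_ord (leqnSn m) k))).
rewrite gen_code_is_code /triv_ext /gen_code -imset_comp; apply/eqP/eq_imset => a /=.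
apply/rowP => j; rewrite !mxE; case: insubP => [k _ kj|jm]; rewrite ?mxE.
  by congr (_ * v 0 _); apply: val_inj.
have -> : j = ord_max by apply/val_inj/eqP; rewrite eqn_leq -ltnS ltn_ord leqNgt.
by rewrite v0 mulr0.
Qed.

Lemma equiv_triv_ext_gen_codeP m (v : word m.+1) :
  reflect (exists j, v 0 j = 0)
          [exists D, is_triv_ext D && code_equiv (gen_code v) D].
Proof.
apply: (iffP existsP) => [[D /andP [/existsP [C0 /andP [_ /eqP ->]]]]|[j vj]].
  case/code_equivP => s [e]; rewrite monomial_gen_code => Dv.
  have : monomial s e v \in triv_ext C0 by rewrite Dv mem_gen_code.
  case/imsetP => c _ vc; exists (s ord_max); apply/eqP.
  by rewrite -(monomial_eq0 s e) vc mxE insubN ?ltnn.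
exists (gen_code (permw (tperm j ord_max) v)).
rewrite gen_code_triv_ext ?mxE ?tpermR //; apply/code_equivP.
exists (tperm j ord_max), [ffun=> false]; rewrite monomial_gen_code.
by congr gen_code; apply/rowP => k; rewrite !mxE ffunE mul1r.
Qed.

Lemma Ncodes10P m (C : {set word m.+1}) :
  reflect (exists2 v, C = gen_code v & (exists j, v 0 j = 1) /\ forall j, v 0 j != 0)
          (C \in Ncodes m.+1 1 0).
Proof.
rewrite inE; apply: (iffP and3P) => [[_ /has_type10P [v -> v1] /equiv_triv_ext_gen_codeP nz]|].
  by exists v; split=> // j; apply/eqP => vj; apply: nz; exists j.
case=> v -> [v1 nz]; split; first exact: gen_code_is_code.
  by apply/has_type10P; exists v.
by apply/equiv_triv_ext_gen_codeP => -[j /eqP]; rewrite (negbTE (nz j)).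
Qed.

Definition num2 n (v : word n) : nat := #|[set j | v 0 j == 2]|.

Lemma num2_monomial n (s : 'S_n) e (v : word n) : num2 (monomial s e v) = num2 v.
Proof.
rewrite /num2 -[RHS](card_preimset _ (@perm_inj _ s)); apply: eq_card => j.
by rewrite !inE mxE Z4_mul_sign_eq2.
Qed.

Lemma num2_scale_unit n (a b : Z4) (v : word n) : a * b = 1 -> num2 (a *: v) = num2 v.
Proof.
by move=> ab; apply: eq_card => j; rewrite !inE mxE (Z4_mul_unit_eq2 _ ab).
Qed.

Lemma num2_lt n (v : word n) j : v 0 j = 1 -> (num2 v < n)%N.
Proof.
move=> vj; rewrite -[X in (_ < X)%N]card_ord -cardsT; apply: proper_card.
by rewrite properT; apply/eqP => all2; move: (in_setT j); rewrite -all2 inE vj.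
Qed.

Definition canon_word n (t : nat) : word n := \row_k (if (k < t)%N then 2 else 1).

Lemma canon_word_neq0 n t k : canon_word n t 0 k != 0.
Proof. by rewrite mxE; case: ifP. Qed.

Lemma num2_canon_word n t : (t <= n)%N -> num2 (canon_word n t) = t.
Proof.
move=> tn; rewrite -[RHS](card_ord_lt tn); apply: eq_card => k.
by rewrite !inE mxE; case: ifP.
Qed.

Lemma monomial_canon_word n (v : word n) :
  (forall j, v 0 j != 0) -> exists s e, monomial s e (canon_word n (num2 v)) = v.
Proof.
move=> nz; set w := canon_word n (num2 v).
have [p vw] : exists p : 'S_n, forall j, (v 0 j == 2) = (w 0 (p j) == 2).
  apply: (@perm_of_card_eq _ [pred j | v 0 j == 2] [pred k | w 0 k == 2]).
  transitivity (num2 v); first by apply: eq_card => j; rewrite inE.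
  have v2_le : (num2 v <= n)%N by rewrite -[X in (_ <= X)%N]card_ord max_card.
  rewrite -{1}(num2_canon_word v2_le).
  by apply: eq_card => j; rewrite inE.
exists p, [ffun j => v 0 j == -1]; apply/rowP => j; rewrite mxE ffunE.
have -> : w 0 (p j) = if v 0 j == 2 then 2 else 1 by rewrite vw /w mxE; case: ifP.
exact: Z4_sign_decomp.
Qed.

Lemma num2_code_equiv n (v w : word n) :
  (exists j, w 0 j = 1) -> code_equiv (gen_code v) (gen_code w) -> num2 w = num2 v.
Proof.
move=> [j wj] /code_equivP [s [e]]; rewrite monomial_gen_code => vw.
have /imsetP [a _ wa] : w \in gen_code (monomial s e v) by rewrite -vw mem_gen_code.
have a_unit : a * monomial s e v 0 j = 1 by rewrite -wj wa [RHS]mxE.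
by rewrite wa (num2_scale_unit _ a_unit) num2_monomial.
Qed.

Section CanonicalClasses.

Variable m : nat.

Lemma canon_word_last (t : 'I_m.+1) : canon_word m.+1 t 0 ord_max = 1.
Proof. by rewrite mxE ltnNge -ltnS ltn_ord. Qed.

Lemma canon_code_Ncodes (t : 'I_m.+1) : gen_code (canon_word m.+1 t) \in Ncodes m.+1 1 0.
Proof.
apply/Ncodes10P; exists (canon_word m.+1 t) => //; split; last exact: canon_word_neq0.
by exists ord_max; rewrite canon_word_last.
Qed.

Definition canon_class (t : 'I_m.+1) := equiv_class (gen_code (canon_word m.+1 t)).

Lemma canon_class_inj : injective canon_class.
Proof.
move=> t1 t2 t12; apply: val_inj.
have num2_canon (t : 'I_m.+1) : num2 (canon_word m.+1 t) = t.
  exact/num2_canon_word/ltnW.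
have : gen_code (canon_word m.+1 t2) \in canon_class t1.
  by rewrite t12 inE; exact: code_equiv_refl.
rewrite inE => /num2_code_equiv; rewrite !num2_canon => t21.
by apply/esym/t21; exists ord_max; exact: canon_word_last.
Qed.

Lemma Ncodes10_classes :
  [set equiv_class C | C in Ncodes m.+1 1 0] = [set canon_class t | t : 'I_m.+1].
Proof.
apply/setP => X; apply/imsetP/imsetP => [[C /Ncodes10P [v -> [[j vj] nz]] ->]|[t _ ->]].
  exists (Ordinal (num2_lt vj)); first by [].
  apply/equiv_class_eq/code_equiv_sym/code_equivP.
  have [s [e ve]] := monomial_canon_word nz.
  by exists s, e; rewrite monomial_gen_code ve.
by exists (gen_code (canon_word m.+1 t)); first exact: canon_code_Ncodes.
Qed.

End CanonicalClasses.

Theorem mainTheorem6 (n : nat) : (0 < n)%N -> Nprime n 1 0 = n.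
Proof.
case: n => // m _.
rewrite /Nprime Ncodes10_classes card_imset; first exact: card_ord.
exact: canon_class_inj.
Qed.
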